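(* Let $X$, $Y$ be disjoint sets of cardinality at least two, $M\le\mathrm{Sym}(X)$ and $N\le\mathrm{Sym}(Y)$ nontrivial permutation groups, $T$ the $(|X|,|Y|)$-biregular tree and $c$ a legal colouring. Let $a$ be any arc of $T$ and $G:=U_c(M,N)$. Then for every $h\in G_a$ (the subgroup fixing both $o(a)$ and $t(a)$) there exists $g\in G$ such that $g$ fixes $T_{\overline{a}}$ pointwise and $g|_{T_a} = h|_{T_a}$.
   Context: $T$ has natural bipartition $VT=V_X\sqcup V_Y$ (vertices in $V_X$ have valency $|X|$, in $V_Y$ valency $|Y|$). An arc is an ordered pair $a=(o(a),t(a))$ of adjacent vertices, and $\overline{a}=(t(a),o(a))$. $T_a$ denotes the connected component of $T$ with the edge $\{o(a),t(a)\}$ removed that contains $o(a)$, and $T_{\overline a}$ the component containing $t(a)$. $A(v)$, $\overline{A}(v)$ are the sets of arcs with origin, resp. terminus, $v$. A legal colouring is a map $c:AT\to X\cup Y$ restricting to a bijection $A(v)\to X$ for $v\in V_X$, to a bijection $A(v)\to Y$ for $v\in V_Y$, and constant on each $\overline{A}(v)$. $U_c(M,N)$ is the group of $g\in\mathrm{Aut}(T)$ with $gV_X=V_X$ and $c|_{A(gv)}\circ g|_{A(v)}\circ(c|_{A(v)})^{-1}$ in $M$ for $v\in V_X$ and in $N$ for $v\in V_Y$. *)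

From Stdlib Require Import List Relations.
Import ListNotations.
Set Implicit Arguments.

Section Defs.
Variables (X Y V : Type).

Definition bijective_map (A : Type) (f : A -> A) : Prop :=
  exists g : A -> A, (forall a, g (f a) = a) /\ (forall a, f (g a) = a).

Definition perm_group (A : Type) (M : (A -> A) -> Prop) : Prop :=
  (forall s, M s -> bijective_map s) /\
  M (fun a => a) /\
  (forall s t, M s -> M t -> M (fun a => s (t a))) /\
  (forall s, M s -> exists t, M t /\ (forall a, t (s a) = a) /\ (forall a, s (t a) = a)).

Definition nontrivial_group (A : Type) (M : (A -> A) -> Prop) : Prop :=
  exists s, M s /\ exists a, s a <> a.

Definition card_ge2 (A : Type) : Prop := exists a b : A, a <> b.

Variable adj : V -> V -> Prop.

Fixpoint walk (l : list V) : Prop :=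
  match l with
  | u :: ((v :: _) as l') => adj u v /\ walk l'
  | _ => True
  end.

(* a (simple) cycle: closed walk v0 v1 ... vn = v0 with n >= 3 edges and
   v0, ..., v_{n-1} pairwise distinct *)
Definition has_cycle : Prop :=
  exists (v0 : V) (l : list V),
    3 <= length l /\ walk (v0 :: l) /\ last l v0 = v0 /\ NoDup l.

Definition connected : Prop := forall u v, clos_refl_trans V adj u v.

(** T is a tree whose natural bipartition is VT = V_X ⊔ V_Y (V_X = {v | VX v}). *)
Definition bip_tree (VX : V -> bool) : Prop :=
  (forall u v, adj u v -> adj v u) /\
  (forall v, ~ adj v v) /\
  connected /\ ~ has_cycle /\
  (forall u v, adj u v -> VX u <> VX v).

(** Legal colouring c : AT -> X ⊔ Y (arcs are pairs (u,v) with adj u v). *)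
Definition legal_colouring (VX : V -> bool) (c : V -> V -> X + Y) : Prop :=
  (forall v, VX v = true ->
     (forall w, adj v w -> exists x, c v w = inl x) /\
     (forall x, exists w, adj v w /\ c v w = inl x /\
                  forall w', adj v w' -> c v w' = inl x -> w' = w)) /\
  (forall v, VX v = false ->
     (forall w, adj v w -> exists y, c v w = inr y) /\
     (forall y, exists w, adj v w /\ c v w = inr y /\
                  forall w', adj v w' -> c v w' = inr y -> w' = w)) /\
  (forall v u u', adj u v -> adj u' v -> c u v = c u' v).

Definition is_aut (g : V -> V) : Prop :=
  bijective_map g /\ forall u v, adj u v <-> adj (g u) (g v).

(** The local action c|_{A(gv)} ∘ g|_{A(v)} ∘ (c|_{A(v)})^{-1} lies in M
    (for v in V_X), resp. in N (for v in V_Y). *)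
Definition local_in_X (c : V -> V -> X + Y) (M : (X -> X) -> Prop) (g : V -> V) (v : V) :=
  exists s, M s /\ forall w x, adj v w -> c v w = inl x -> c (g v) (g w) = inl (s x).
Definition local_in_Y (c : V -> V -> X + Y) (N : (Y -> Y) -> Prop) (g : V -> V) (v : V) :=
  exists s, N s /\ forall w y, adj v w -> c v w = inr y -> c (g v) (g w) = inr (s y).

Definition in_U (VX : V -> bool) (c : V -> V -> X + Y)
    (M : (X -> X) -> Prop) (N : (Y -> Y) -> Prop) (g : V -> V) : Prop :=
  is_aut g /\ (forall v, VX (g v) = VX v) /\
  (forall v, VX v = true -> local_in_X c M g v) /\
  (forall v, VX v = false -> local_in_Y c N g v).

Definition adj_minus (o t : V) (u v : V) : Prop :=
  adj u v /\ ~ ((u = o /\ v = t) \/ (u = t /\ v = o)).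

(* T_a for a = (o,t): the component of T - {o,t} containing o *)
Definition half_tree (o t : V) (w : V) : Prop :=
  clos_refl_trans V (adj_minus o t) o w.

End Defs.

(* The half-tree T_a is carried onto itself by h, since h is an automorphism fixing o(a) and
   t(a), and the only edge leaving T_a is {o(a), t(a)}, whose endpoints h fixes.  Hence the map
   g that agrees with h on T_a and with the identity elsewhere is still an automorphism.  At a
   vertex of T_a every neighbour is moved as by h, so g has the local action of h there; at any
   other vertex every neighbour is fixed, so the local action is the identity, which lies in M
   and in N.  Finally T_a and T_{\bar a} are disjoint because T has no cycles. *)
From Stdlib Require Import List Relations Classical ClassicalDescription Lia.
Import ListNotations.
Set Implicit Arguments.

Lemma last_cons (A : Type) (l : list A) : forall a d, last (a :: l) d = last l a.
Proof.
  induction l as [|b l IH]; intros a d; [reflexivity|].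
  change (last (b :: l) d = last (b :: l) a). rewrite (IH b d), (IH b a). reflexivity.
Qed.

Lemma last_app_cons (A : Type) (l : list A) : forall x r d, last (l ++ x :: r) d = last r x.
Proof.
  induction l as [|y l IH]; intros x r d; simpl (_ ++ _); rewrite last_cons; [reflexivity|].
  apply IH.
Qed.

Section Walks.
Variables (V : Type) (R : V -> V -> Prop).

Lemma walk_cons_inv {y : V} {l : list V} : walk R (y :: l) -> walk R l.
Proof. destruct l; simpl; tauto. Qed.

Lemma walk_app_r {l r : list V} : walk R (l ++ r) -> walk R r.
Proof.
  induction l as [|y l IH]; [auto|].
  intro H. exact (IH (walk_cons_inv H)).
Qed.

Lemma walk_impl (S : V -> V -> Prop) (HRS : forall u v, R u v -> S u v) {l : list V} :
  walk R l -> walk S l.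
Proof.
  induction l as [|a [|b l] IH]; simpl; auto.
  intros [Hab Hw]. split; [auto | apply IH, Hw].
Qed.

(* Prepending a vertex that already lies on the walk closes a loop, which is dropped. *)
Lemma clos_rt_simple_walk (x y : V) : clos_refl_trans V R x y ->
  exists l, walk R (x :: l) /\ NoDup (x :: l) /\ last l x = y.
Proof.
  intro Hxy. apply clos_rt_rt1n in Hxy.
  induction Hxy as [x|x x1 y Hx _ [l [Hw [Hn Hl]]]].
  - exists []. split; [exact I | split; [repeat constructor; intros [] | reflexivity]].
  - destruct (classic (In x (x1 :: l))) as [Hin|Hnin].
    + apply in_split in Hin. destruct Hin as [p [r Hpr]].
      exists r. rewrite Hpr in Hw, Hn. split; [|split].
      * exact (walk_app_r Hw).
      * exact (NoDup_app_remove_l _ _ Hn).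
      * rewrite <- Hl, <- (last_cons l x1 x1), Hpr, last_app_cons. reflexivity.
    + exists (x1 :: l). split; [|split].
      * split; assumption.
      * constructor; assumption.
      * rewrite last_cons. exact Hl.
Qed.

Lemma clos_rt_impl (S : V -> V -> Prop) (HRS : forall u v, R u v -> S u v) x y :
  clos_refl_trans V R x y -> clos_refl_trans V S x y.
Proof. induction 1; [apply rt_step; auto | apply rt_refl | eapply rt_trans; eauto]. Qed.

Lemma clos_rt_sym (Hsym : forall u v, R u v -> R v u) x y :
  clos_refl_trans V R x y -> clos_refl_trans V R y x.
Proof. induction 1; [apply rt_step; auto | apply rt_refl | eapply rt_trans; eauto]. Qed.

Lemma clos_rt_map (f : V -> V) (Hf : forall u v, R u v -> R (f u) (f v)) x y :
  clos_refl_trans V R x y -> clos_refl_trans V R (f x) (f y).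
Proof. induction 1; [apply rt_step; auto | apply rt_refl | eapply rt_trans; eauto]. Qed.

End Walks.

Section HalfTrees.
Variables (V : Type) (adj : V -> V -> Prop).
Hypothesis adj_sym : forall u v, adj u v -> adj v u.

Lemma adj_minus_sym o t u v : adj_minus adj o t u v -> adj_minus adj o t v u.
Proof. intros [Huv Hne]. split; [auto | tauto]. Qed.

Lemma adj_minus_swap o t u v : adj_minus adj o t u v -> adj_minus adj t o u v.
Proof. intros [Huv Hne]. split; [auto | tauto]. Qed.

Lemma half_tree_boundary o t u v :
  half_tree adj o t u -> ~ half_tree adj o t v -> adj u v -> u = o /\ v = t.
Proof.
  intros Hu Hv Huv.
  destruct (classic ((u = o /\ v = t) \/ (u = t /\ v = o))) as [[E|[_ ->]]|Hne].
  - exact E.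
  - exfalso. apply Hv, rt_refl.
  - exfalso. apply Hv. eapply rt_trans; [exact Hu | apply rt_step; split; assumption].
Qed.

Lemma no_cycle_no_detour o t :
  (forall v, ~ adj v v) -> ~ has_cycle adj -> adj o t ->
  ~ clos_refl_trans V (adj_minus adj o t) t o.
Proof.
  intros Hirr Hacyc Hot Hto.
  destruct (clos_rt_simple_walk Hto) as [[|b [|b' l]] [Hw [Hn Hl]]].
  - simpl in Hl. subst t. exact (Hirr o Hot).
  - simpl in Hl. subst b. destruct Hw as [[_ Hne] _]. tauto.
  - apply Hacyc. exists o, (t :: b :: b' :: l). split; [simpl; lia|]. split; [|split].
    + split; [exact Hot|]. exact (walk_impl _ _ (fun u v H => proj1 H) Hw).
    + rewrite last_cons. exact Hl.
    + exact Hn.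
Qed.

Lemma half_tree_disjoint o t w :
  (forall v, ~ adj v v) -> ~ has_cycle adj -> adj o t ->
  half_tree adj o t w -> half_tree adj t o w -> False.
Proof.
  intros Hirr Hacyc Hot Hw Hw'. apply (no_cycle_no_detour Hirr Hacyc Hot). eapply rt_trans.
  - exact (clos_rt_impl _ (adj_minus_swap (o := t) (t := o)) Hw').
  - exact (clos_rt_sym (adj_minus_sym (o := o) (t := t)) Hw).
Qed.

Lemma is_aut_inj h : is_aut adj h -> forall u v, h u = h v -> u = v.
Proof.
  intros [[hi [Hhi _]] _] u v E. rewrite <- (Hhi u), <- (Hhi v), E. reflexivity.
Qed.

Lemma is_aut_inverse h : is_aut adj h ->
  exists hi, is_aut adj hi /\ (forall w, hi (h w) = w) /\ (forall w, h (hi w) = w).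
Proof.
  intros [[hi [Hhi Hih]] Hadj]. exists hi. split; [|tauto].
  split; [exists h; tauto|].
  intros u v. rewrite (Hadj (hi u) (hi v)), !Hih. tauto.
Qed.

Lemma half_tree_aut_image h o t w : is_aut adj h -> h o = o -> h t = t ->
  half_tree adj o t w -> half_tree adj o t (h w).
Proof.
  intros Hh Ho Ht Hw. unfold half_tree. rewrite <- Ho at 2.
  apply clos_rt_map; [|exact Hw].
  intros u v [Huv Hne]. split; [exact (proj1 (proj2 Hh u v) Huv)|].
  pose proof (is_aut_inj Hh) as Hinj.
  intros [[E1 E2]|[E1 E2]]; apply Hne; [left|right]; split; apply Hinj; congruence.
Qed.

Lemma half_tree_aut_iff h o t : is_aut adj h -> h o = o -> h t = t ->
  forall w, half_tree adj o t (h w) <-> half_tree adj o t w.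
Proof.
  intros Hh Ho Ht w. split; [|exact (half_tree_aut_image Hh Ho Ht)].
  destruct (is_aut_inverse Hh) as [hi [Hhi [Hih _]]].
  assert (Hio : hi o = o) by (rewrite <- Ho at 1; apply Hih).
  assert (Hit : hi t = t) by (rewrite <- Ht at 1; apply Hih).
  intro Hw. rewrite <- (Hih w). exact (half_tree_aut_image Hhi Hio Hit Hw).
Qed.

End HalfTrees.

Section Patch.
Variables (V : Type) (adj : V -> V -> Prop) (S : V -> Prop) (h : V -> V).
Hypothesis adj_sym : forall u v, adj u v -> adj v u.
Hypothesis h_aut : is_aut adj h.
Hypothesis h_stable : forall w, S (h w) <-> S w.
Hypothesis h_fixes_boundary : forall u v, S u -> ~ S v -> adj u v -> h u = u /\ h v = v.

Definition patch (f : V -> V) (w : V) : V :=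
  if excluded_middle_informative (S w) then f w else w.

Lemma patch_in f {w} : S w -> patch f w = f w.
Proof. unfold patch. destruct (excluded_middle_informative (S w)); tauto. Qed.

Lemma patch_out f {w} : ~ S w -> patch f w = w.
Proof. unfold patch. destruct (excluded_middle_informative (S w)); tauto. Qed.

Lemma patch_nbr_in v w : S v -> adj v w -> patch h w = h w.
Proof.
  intros Hv Hvw. destruct (classic (S w)) as [Hw|Hw]; [exact (patch_in h Hw)|].
  rewrite (patch_out h Hw). symmetry. exact (proj2 (h_fixes_boundary Hv Hw Hvw)).
Qed.

Lemma patch_nbr_out v w : ~ S v -> adj v w -> patch h w = w.
Proof.
  intros Hv Hvw. destruct (classic (S w)) as [Hw|Hw]; [|exact (patch_out h Hw)].
  rewrite (patch_in h Hw). exact (proj1 (h_fixes_boundary Hw Hv (adj_sym Hvw))).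
Qed.

Lemma adj_across_boundary u v : S u -> ~ S v -> (adj u v <-> adj (h u) v).
Proof.
  intros Hu Hv. split; intro Huv.
  - rewrite (proj1 (h_fixes_boundary Hu Hv Huv)). exact Huv.
  - destruct (h_fixes_boundary (proj2 (h_stable u) Hu) Hv Huv) as [Ehu _].
    rewrite (is_aut_inj h_aut _ _ Ehu) in Huv. exact Huv.
Qed.

Lemma patch_is_aut : is_aut adj (patch h).
Proof.
  destruct (is_aut_inverse h_aut) as [hi [_ [Hhi Hih]]].
  assert (hi_stable : forall w, S (hi w) <-> S w).
  { intro w. rewrite <- (h_stable (hi w)), Hih. tauto. }
  split.
  - exists (patch hi). split; intro w; destruct (classic (S w)) as [Hw|Hw].
    + rewrite (patch_in h Hw), (patch_in hi (proj2 (h_stable w) Hw)). apply Hhi.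
    + rewrite !(patch_out _ Hw). reflexivity.
    + rewrite (patch_in hi Hw), (patch_in h (proj2 (hi_stable w) Hw)). apply Hih.
    + rewrite !(patch_out _ Hw). reflexivity.
  - intros u v.
    destruct (classic (S u)) as [Hu|Hu]; destruct (classic (S v)) as [Hv|Hv];
      rewrite ?(patch_in h Hu), ?(patch_in h Hv), ?(patch_out h Hu), ?(patch_out h Hv).
    + apply (proj2 h_aut).
    + exact (adj_across_boundary Hu Hv).
    + pose proof (adj_across_boundary Hv Hu). split; intro; apply adj_sym; firstorder.
    + reflexivity.
Qed.

Lemma patch_in_U (X Y : Type) (VX : V -> bool) (c : V -> V -> X + Y)
    (M : (X -> X) -> Prop) (N : (Y -> Y) -> Prop) :
  M (fun x => x) -> N (fun y => y) ->
  in_U adj VX c M N h -> in_U adj VX c M N (patch h).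
Proof.
  intros HMid HNid [_ [HVX [HlocX HlocY]]].
  split; [exact patch_is_aut|]. split; [|split].
  - intro v. destruct (classic (S v)) as [Hv|Hv];
      rewrite ?(patch_in h Hv), ?(patch_out h Hv); [apply HVX | reflexivity].
  - intros v Hvx. destruct (classic (S v)) as [Hv|Hv].
    + destruct (HlocX v Hvx) as [s [Hs Hloc]]. exists s. split; [exact Hs|].
      intros w x Hvw. rewrite (patch_in h Hv), (patch_nbr_in Hv Hvw). apply Hloc, Hvw.
    + exists (fun x => x). split; [exact HMid|].
      intros w x Hvw. rewrite (patch_out h Hv), (patch_nbr_out Hv Hvw). auto.
  - intros v Hvy. destruct (classic (S v)) as [Hv|Hv].
    + destruct (HlocY v Hvy) as [s [Hs Hloc]]. exists s. split; [exact Hs|].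
      intros w y Hvw. rewrite (patch_in h Hv), (patch_nbr_in Hv Hvw). apply Hloc, Hvw.
    + exists (fun y => y). split; [exact HNid|].
      intros w y Hvw. rewrite (patch_out h Hv), (patch_nbr_out Hv Hvw). auto.
Qed.

End Patch.

Theorem lemma3p11 (X Y V : Type) (adj : V -> V -> Prop) (VX : V -> bool)
  (c : V -> V -> X + Y) (M : (X -> X) -> Prop) (N : (Y -> Y) -> Prop)
  (hX : card_ge2 X) (hY : card_ge2 Y)
  (hM : perm_group M) (hN : perm_group N)
  (hMnt : nontrivial_group M) (hNnt : nontrivial_group N)
  (hT : bip_tree adj VX) (hc : legal_colouring adj VX c)
  (o t : V) (ha : adj o t)
  (h : V -> V) (hG : in_U adj VX c M N h) (ho : h o = o) (ht : h t = t) :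
  exists g : V -> V, in_U adj VX c M N g /\
    (forall w, half_tree adj t o w -> g w = w) /\
    (forall w, half_tree adj o t w -> g w = h w).
Proof.
  destruct hT as [Hsym [Hirr [_ [Hacyc _]]]].
  destruct hM as [_ [HMid _]]. destruct hN as [_ [HNid _]].
  set (S := half_tree adj o t).
  assert (h_aut : is_aut adj h) by exact (proj1 hG).
  assert (h_stable : forall w, S (h w) <-> S w)
    by exact (half_tree_aut_iff h_aut ho ht).
  assert (h_fixes_boundary : forall u v, S u -> ~ S v -> adj u v -> h u = u /\ h v = v).
  { intros u v Hu Hv Huv. destruct (half_tree_boundary Hu Hv Huv) as [-> ->]. tauto. }
  exists (patch S h). split; [|split].
  - exact (patch_in_U S Hsym h_aut h_stable h_fixes_boundary HMid HNid hG).
  - intros w Hw. apply (patch_out S h). intro Hw'.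
    exact (half_tree_disjoint Hsym Hirr Hacyc ha Hw' Hw).
  - intros w Hw. exact (patch_in S h Hw).
Qed.
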